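(* Let $X$ be a topological space in which every $\Lambda$-set is a $G_\delta$-set, and suppose that for each pair of disjoint $F_\sigma$-sets $F_0,F_1$ in $X$ there exist $G_\delta$-sets $G_0,G_1$ with $F_0\subseteq G_0$, $F_1\subseteq G_1$ and $G_0\cap G_1=\varnothing$. Let $g,f:X\to\mathbb{R}$ be functions such that $f$ is lower semi-Baire-one, $g$ is upper semi-Baire-one, and $f\le g$. Then there exists a Baire-one function $h:X\to\mathbb{R}$ such that $f\le h\le g$.
   Context: A $\Lambda$-set in $X$ is an intersection of open sets. A function $f:X\to\mathbb{R}$ is upper semi-Baire-one (resp. lower semi-Baire-one) if $f^{-1}(-\infty,t)$ (resp. $f^{-1}(t,+\infty)$) is an $F_\sigma$-set in $X$ for every real $t$. A function $h:X\to\mathbb{R}$ is Baire-one if the preimage of every open subset of $\mathbb{R}$ is an $F_\sigma$-set in $X$. $f\le g$ means $f(x)\le g(x)$ for all $x\in X$. *)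

From HB Require Import structures.
From mathcomp Require Import all_boot all_order all_algebra.
From mathcomp Require Import all_classical all_reals all_analysis.
From mathcomp Require Import borel_hierarchy.
Set Implicit Arguments. Unset Strict Implicit. Unset Printing Implicit Defensive.
Import Order.TTheory GRing.Theory Num.Theory.
Import numFieldNormedType.Exports.
Local Open Scope classical_set_scope.
Local Open Scope ring_scope.

Definition Lambda_set {T : topologicalType} (A : set T) : Prop :=
  exists F : set (set T), (forall U, F U -> open U) /\ A = \bigcap_(U in F) U.

Definition upper_semi_Baire_one {T : topologicalType} {R : realType}
  (f : T -> R) : Prop :=
  forall t : R, Fsigma (f @^-1` `]-oo, t[).

Definition lower_semi_Baire_one {T : topologicalType} {R : realType}
  (f : T -> R) : Prop :=
  forall t : R, Fsigma (f @^-1` `]t, +oo[).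

Definition Baire_one {T : topologicalType} {R : realType} (h : T -> R) : Prop :=
  forall V : set R, open V -> Fsigma (h @^-1` V).

(* Under the Lambda-set hypothesis an arbitrary intersection of G_delta sets is
   G_delta, so every set A has a smallest G_delta superset ^A, and arbitrary
   unions of F_sigma sets are F_sigma.  The separation hypothesis makes ^A an
   F_sigma set when A is one: separating A from ~^A by disjoint G_delta sets
   G0 and G1, minimality gives ^A included in G0, hence ^A = ~G1.
   Put C_s = ^[f > s].  The family C is nonincreasing, lies between [f > s]
   and the G_delta set [g >= s], and h x = sup {s | x in C_s} satisfies
   [h > t] = U_{s > t} C_s and [h < t] = U_{s < t} ~C_s, which are F_sigma;
   hence h is Baire-one and f <= h <= g. *)
From HB Require Import structures.
From mathcomp Require Import all_boot all_order all_algebra.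
From mathcomp Require Import all_classical all_reals all_analysis.
From mathcomp Require Import borel_hierarchy.
From mathcomp Require Import lra.
Import Order.TTheory GRing.Theory Num.Theory.
Import numFieldNormedType.Exports.
Local Open Scope classical_set_scope.
Local Open Scope ring_scope.

Section Fsigma_Gdelta_complement.
Context {X : topologicalType}.
Implicit Types A : set X.

Lemma Fsigma_setC A : Fsigma A -> Gdelta (~` A).
Proof.
move=> [F cF ->]; exists (fun i => ~` F i); last by rewrite setC_bigcup.
by move=> i; exact: closed_openC.
Qed.

Lemma Gdelta_setC A : Gdelta A -> Fsigma (~` A).
Proof.
move=> [F oF ->]; exists (fun i => ~` F i); last by rewrite setC_bigcap.
by move=> i; exact: open_closedC.
Qed.

End Fsigma_Gdelta_complement.

Section level_sup.
Context {T : Type} {R : realType}.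

Definition level_sup (C : R -> set T) (x : T) : R := sup [set s | C s x].

Context {C : R -> set T}.
Hypothesis C_nonincr : forall s r, s <= r -> C r `<=` C s.
Hypothesis C_has_sup : forall x, has_sup [set s | C s x].

Lemma le_level_sup s x : C s x -> s <= level_sup C x.
Proof. by move=> Csx; apply: ub_le_sup => //; case: (C_has_sup x). Qed.

Lemma level_sup_le x r : (forall s, C s x -> s <= r) -> level_sup C x <= r.
Proof. by move=> ub; apply: ge_sup => //; case: (C_has_sup x). Qed.

Lemma level_sup_ge x r : (forall s, s < r -> C s x) -> r <= level_sup C x.
Proof.
move=> rC; rewrite leNgt; apply/negP => lt_r.
have /le_level_sup : C ((level_sup C x + r) / 2) x by apply: rC; lra.
lra.
Qed.

Lemma level_sup_gtE t :
  [set x | t < level_sup C x] = \bigcup_(s in [set s | t < s]) C s.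
Proof.
apply/seteqP; split => x /=.
  by move=> /sup_gt[|s Csx ts]; [case: (C_has_sup x) | exists s].
by move=> [s /= ts /le_level_sup]; apply: lt_le_trans.
Qed.

Lemma level_sup_ltE t :
  [set x | level_sup C x < t] = \bigcup_(s in [set s | s < t]) ~` C s.
Proof.
apply/seteqP; split => x /=.
  move=> ht; exists ((level_sup C x + t) / 2); first by rewrite /=; lra.
  by move=> /le_level_sup; lra.
move=> [s /= st nCsx]; apply: le_lt_trans st; apply: level_sup_le => r Crx.
by rewrite leNgt; apply/negP => /ltW sr; apply: nCsx; exact: C_nonincr Crx.
Qed.

End level_sup.

Section Lambda_Gdelta.
Context {X : topologicalType}.
Hypothesis Lambda_Gdelta : forall A : set X, Lambda_set A -> Gdelta A.
Implicit Types A B G : set X.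

Lemma Gdelta_bigcap (I : Type) (P : set I) (B : I -> set X) :
  (forall i, P i -> Gdelta (B i)) -> Gdelta (\bigcap_(i in P) B i).
Proof.
move=> GB; apply: Lambda_Gdelta.
exists [set U | open U /\ exists2 i, P i & B i `<=` U].
split; first by move=> U [].
apply/seteqP; split => x /=.
  by move=> Bx U [_ [i Pi]]; apply; exact: Bx.
move=> Ux i Pi; have [F oF BF] := GB i Pi.
rewrite BF => n _; apply: Ux; split => //; exists i => //.
by rewrite BF => y; apply.
Qed.

Lemma Fsigma_bigcup (I : Type) (P : set I) (A : I -> set X) :
  (forall i, P i -> Fsigma (A i)) -> Fsigma (\bigcup_(i in P) A i).
Proof.
move=> FA; rewrite -[X in Fsigma X]setCK; apply: Gdelta_setC.
by rewrite setC_bigcup; apply: Gdelta_bigcap => i Pi; apply/Fsigma_setC/FA.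
Qed.

Lemma FsigmaI A B : Fsigma A -> Fsigma B -> Fsigma (A `&` B).
Proof.
move=> [F cF ->] [G cG ->]; rewrite setI_bigcupl.
apply: Fsigma_bigcup => i _; rewrite setI_bigcupr.
by apply: Fsigma_bigcup => j _; apply: closed_Fsigma; exact: closedI.
Qed.

Lemma Baire_one_levels (R : realType) (h : X -> R) :
  (forall t, Fsigma [set x | t < h x]) ->
  (forall t, Fsigma [set x | h x < t]) -> Baire_one h.
Proof.
move=> Fgt Flt V oV.
have -> : h @^-1` V = \bigcup_(p in [set p : R * R | `]p.1, p.2[ `<=` V])
    ([set x | p.1 < h x] `&` [set x | h x < p.2]).
  apply/seteqP; split => x /=.
    move=> Vhx; have /nbhs_ballP[e /= e0 eV] := open_nbhs_nbhs (conj oV Vhx).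
    exists (h x - e, h x + e) => /=; last by split; lra.
    move=> y /=; rewrite in_itv /= => yhx; apply: eV.
    by rewrite -ball_normE /= ltr_distlC.
  move=> [[a b] /= abV [ax xb]]; apply: abV => /=.
  by rewrite in_itv /= ax xb.
by apply: Fsigma_bigcup => p _; exact: FsigmaI.
Qed.

Definition Gdelta_hull A := \bigcap_(G in [set G | Gdelta G /\ A `<=` G]) G.

Lemma Gdelta_hull_Gdelta A : Gdelta (Gdelta_hull A).
Proof. by apply: Gdelta_bigcap => G []. Qed.

Lemma sub_Gdelta_hull A : A `<=` Gdelta_hull A.
Proof. by move=> x Ax G [_]; apply. Qed.

Lemma Gdelta_hull_min A G : Gdelta G -> A `<=` G -> Gdelta_hull A `<=` G.
Proof. by move=> GG AG x; apply. Qed.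

Lemma Gdelta_hullS A B : A `<=` B -> Gdelta_hull A `<=` Gdelta_hull B.
Proof.
by move=> AB x hAx G [GG BG]; apply: hAx; split => //; exact: subset_trans BG.
Qed.

Hypothesis Fsigma_separation : forall F0 F1 : set X,
  Fsigma F0 -> Fsigma F1 -> F0 `&` F1 = set0 ->
  exists G0 G1 : set X,
    [/\ Gdelta G0, Gdelta G1, F0 `<=` G0, F1 `<=` G1 & G0 `&` G1 = set0].

Lemma Fsigma_Gdelta_hull A : Fsigma A -> Fsigma (Gdelta_hull A).
Proof.
move=> FA; have FC : Fsigma (~` Gdelta_hull A).
  exact: Gdelta_setC (Gdelta_hull_Gdelta _).
have disj : A `&` ~` Gdelta_hull A = set0.
  by apply/seteqP; split => // x [/sub_Gdelta_hull].
have [G0 [G1 [G0d G1d AG0 CG1 G01]]] := Fsigma_separation _ _ FA FC disj.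
suff -> : Gdelta_hull A = ~` G1 by exact: Gdelta_setC.
apply/seteqP; split => x.
  move=> Ax G1x; have : (G0 `&` G1) x by split => //; exact: Gdelta_hull_min Ax.
  by rewrite G01.
by move=> nG1x; apply: contra_notP nG1x; exact: CG1.
Qed.

Definition hull_superlevel {R : realType} (f : X -> R) (s : R) :=
  Gdelta_hull [set x | s < f x].

Section interposition.
Context {R : realType} {f g : X -> R}.
Hypotheses (f_lsB1 : lower_semi_Baire_one f) (g_usB1 : upper_semi_Baire_one g).
Hypothesis f_le_g : forall x, f x <= g x.

Lemma hull_superlevel_Fsigma s : Fsigma (hull_superlevel f s).
Proof. by apply: Fsigma_Gdelta_hull; rewrite -preimage_itvoy. Qed.

Lemma hull_superlevel_gt s x : s < f x -> hull_superlevel f s x.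
Proof. exact: (@sub_Gdelta_hull [set y | s < f y] x). Qed.

Lemma hull_superlevel_nonincr s r :
  s <= r -> hull_superlevel f r `<=` hull_superlevel f s.
Proof. by move=> sr; apply: Gdelta_hullS => x /=; apply: le_lt_trans. Qed.

Lemma hull_superlevel_le s x : hull_superlevel f s x -> s <= g x.
Proof.
have Gge : Gdelta [set y | s <= g y].
  have -> : [set y | s <= g y] = ~` (g @^-1` `]-oo, s[).
    rewrite preimage_itvNyo.
    by apply/seteqP; split => y /=; rewrite leNgt => /negP.
  exact/Fsigma_setC/g_usB1.
apply: Gdelta_hull_min Gge _ x => y /= sfy.
exact: ltW (lt_le_trans sfy (f_le_g y)).
Qed.

Lemma hull_superlevel_has_sup x : has_sup [set s | hull_superlevel f s x].
Proof.
split; last by exists (g x) => s /hull_superlevel_le.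
by exists (f x - 1); apply: hull_superlevel_gt; lra.
Qed.

End interposition.
End Lambda_Gdelta.

Theorem corollary4 (X : topologicalType) (R : realType)
  (HL : forall A : set X, Lambda_set A -> Gdelta A)
  (HS : forall F0 F1 : set X, Fsigma F0 -> Fsigma F1 -> F0 `&` F1 = set0 ->
        exists G0 G1 : set X, [/\ Gdelta G0, Gdelta G1, F0 `<=` G0, F1 `<=` G1
                                & G0 `&` G1 = set0])
  (f g : X -> R)
  (hf : lower_semi_Baire_one f) (hg : upper_semi_Baire_one g)
  (hfg : forall x, f x <= g x) :
  exists h : X -> R, Baire_one h /\ (forall x, f x <= h x) /\ (forall x, h x <= g x).
Proof.
pose C := hull_superlevel f.
have C_nonincr := hull_superlevel_nonincr (f := f).
have C_has_sup := hull_superlevel_has_sup hg hfg.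
exists (level_sup C); split; last split.
- apply: (Baire_one_levels HL) => t.
  + rewrite level_sup_gtE //; apply: (Fsigma_bigcup HL) => s _.
    exact: hull_superlevel_Fsigma.
  + rewrite level_sup_ltE //; apply: (Fsigma_bigcup HL) => s _.
    exact/Gdelta_setC/(Gdelta_hull_Gdelta HL).
- by move=> x; apply: level_sup_ge => // s; exact: hull_superlevel_gt.
- by move=> x; apply: level_sup_le => // s; exact: hull_superlevel_le.
Qed.
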